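(* For any $h\in[1,k]$ and any $p\in\mathbb{N}$, the companion matrix $A=A(s)$ satisfies $$(-1)^{k-h}\frac{\partial A^p}{\partial s_h}=\frac{\partial A^p}{\partial s_k}A^{k-h}.$$
   Context: Fix an integer $k\ge 2$ and coordinates $s=(s_1,\dots,s_k)$ on $\mathbb{C}^k$. $A(s)$ is the $(k,k)$ companion matrix of $P_s(z)=\sum_{h=0}^k(-1)^hs_hz^{k-h}$ ($s_0=1$): its entries are $A_{i,i+1}=1$ for $i\in[1,k-1]$, its last row is $A_{k,j}=(-1)^{k-j}s_{k+1-j}$ for $j\in[1,k]$, and all other entries are $0$. *)

From mathcomp Require Import all_boot all_algebra all_field.
From mathcomp Require Import mpoly.
Set Implicit Arguments. Unset Strict Implicit. Unset Printing Implicit Defensive.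
Import GRing.Theory.
Local Open Scope ring_scope.

(* Coordinates s = (s_1,...,s_k) on C^k are the polynomial variables
   'X_j of {mpoly algC[k]}, with s_h = 'X_(h-1) (0-based index j = h-1). *)

(* The companion matrix A(s), 0-based indices: A i (i+1) = 1 for i < k-1,
   last row A (k-1) j = (-1)^(k-1-j) s_{k-j} = (-1)^(k-1-j) 'X_(k-1-j). *)
Definition companion (k : nat) : 'M[{mpoly algC[k]}]_k :=
  \matrix_(i < k, j < k)
    if i.+1 == k then (-1) ^+ (k.-1 - j) * 'X_(rev_ord j)
    else if j == i.+1 :> nat then 1 else 0.

Definition mxpow (R : pzRingType) (k : nat) (M : 'M[R]_k) (p : nat) : 'M[R]_k :=
  iter p (mulmx M) 1%:M.

Definition mxderiv (R : comNzRingType) (k : nat) (j : 'I_k) (M : 'M[{mpoly R[k]}]_k)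
  : 'M[{mpoly R[k]}]_k := map_mx (mderiv j) M.

Lemma ord_pred_lt (k : nat) (i : 'I_k) : (k.-1 < k)%N.
Proof. by case: k i => [[]|]. Qed.

Definition ord_last (k : nat) (i : 'I_k) : 'I_k := Ordinal (ord_pred_lt i).

From mathcomp Require Import all_boot all_algebra all_field.
From mathcomp Require Import mpoly zify.

Set Implicit Arguments.
Unset Strict Implicit.
Unset Printing Implicit Defensive.

Import GRing.Theory.
Local Open Scope ring_scope.

(* Only the last row of A(s) depends on s, and linearly, so dA/ds_h is the
   matrix unit E_(k, k+1-h) times (-1)^(h-1).  The first k-1 rows of A form a
   shift, hence E_(k,1) A^m = E_(k,1+m) for m < k, which gives the case p = 1:
   (-1)^(k-h) dA/ds_h = dA/ds_k A^(k-h).  The Leibniz rule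
   d(A^(p+1)) = dA A^p + A d(A^p), together with the fact that A^(k-h)
   commutes with A^p, propagates this identity to every power of A. *)

Section MatrixPowers.
Variables (R : pzRingType) (n : nat) (M : 'M[R]_n).

Lemma mxpow0 : mxpow M 0 = 1%:M.
Proof. by []. Qed.

Lemma mxpowS p : mxpow M p.+1 = M *m mxpow M p.
Proof. by []. Qed.

Lemma mxpowD p q : mxpow M (p + q) = mxpow M p *m mxpow M q.
Proof.
elim: p => [|p IHp]; first by rewrite mxpow0 mul1mx.
by rewrite addSn !mxpowS IHp mulmxA.
Qed.

Lemma mxpow_commute p q : mxpow M p *m mxpow M q = mxpow M q *m mxpow M p.
Proof. by rewrite -!mxpowD addnC. Qed.

End MatrixPowers.

Section MatrixDerivative.
Variables (R : comNzRingType) (n : nat).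
Implicit Types (i j : 'I_n) (M N : 'M[{mpoly R[n]}]_n).

Lemma mderivXi i j : mderiv j ('X_i : {mpoly R[n]}) = (i == j)%:R.
Proof.
rewrite mderivX mnm1E; case: eqP => [->|_]; last by rewrite scale0r.
suff -> : (U_(j) - U_(j))%MM = 0%MM by rewrite mpolyX0 scale1r.
by apply/mnmP => l; rewrite mnmBE subnn mnm0E.
Qed.

Lemma mderiv_signM j m (q : {mpoly R[n]}) :
  mderiv j ((-1) ^+ m * q) = (-1) ^+ m * mderiv j q.
Proof. by rewrite -signr_odd; case: (odd m); rewrite ?mulN1r ?mul1r ?mderivN. Qed.

Lemma mxderiv1 j : mxderiv j (1%:M : 'M[{mpoly R[n]}]_n) = 0.
Proof. by apply/matrixP => a b; rewrite !mxE -mpolyC_nat mderivC. Qed.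

Lemma mxderivM j M N : mxderiv j (M *m N) = mxderiv j M *m N + M *m mxderiv j N.
Proof.
apply/matrixP => a b; rewrite !mxE raddf_sum -big_split /=.
by apply: eq_bigr => l _; rewrite mderivM !mxE.
Qed.

Lemma mxderiv_mxpow_mulmx i j (c : {mpoly R[n]}) M q :
    c *: mxderiv j M = mxderiv i M *m mxpow M q ->
  forall p, c *: mxderiv j (mxpow M p) = mxderiv i (mxpow M p) *m mxpow M q.
Proof.
move=> dM; elim=> [|p IHp]; first by rewrite mxpow0 !mxderiv1 scaler0 mul0mx.
rewrite !mxpowS !mxderivM scalerDr scalemxAl dM scalemxAr IHp mulmxDl.
by rewrite -!mulmxA (mxpow_commute M q p).
Qed.

End MatrixDerivative.

Section Companion.
Variable k : nat.
Local Notation A := (companion k).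

Lemma mxderiv_companion (j : 'I_k) :
  mxderiv j A = (-1) ^+ j *: delta_mx (ord_last j) (rev_ord j).
Proof.
apply/matrixP => a b; rewrite !mxE /=.
have -> : (a == ord_last j) = (a.+1 == k).
  by rewrite -(inj_eq val_inj) /=; apply/eqP/eqP; have := ltn_ord a; lia.
case: eqP => _ /=; last first.
  by rewrite mulr0; case: ifP; rewrite ?mderiv0 // -mpolyC1 mderivC.
rewrite mderiv_signM mderivXi (can2_eq rev_ordK rev_ordK).
case: eqP => [->|_]; last by rewrite !mulr0.
by rewrite !mulr1; congr (_ ^+ _); have := ltn_ord j; rewrite /=; lia.
Qed.

Lemma row_companion (j j' : 'I_k) :
  j' = j.+1 :> nat -> row j A = delta_mx 0 j'.
Proof.
move=> jj'; apply/matrixP => a b; rewrite !mxE ord1 eqxx /=.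
rewrite (_ : j.+1 == k = false); last by apply/negbTE; have := ltn_ord j'; lia.
by rewrite -(inj_eq val_inj) /= jj'; case: eqP.
Qed.

Lemma delta_mx_mul_companion (i j j' : 'I_k) :
  j' = j.+1 :> nat -> delta_mx i j *m A = delta_mx i j'.
Proof.
move=> jj'; rewrite -(mul_delta_mx (0 : 'I_1) i j) -mulmxA -rowE.
by rewrite (row_companion jj') mul_delta_mx.
Qed.

Lemma delta_mx_mul_mxpow_companion q (i j j' : 'I_k) :
  j' = (j + q)%N :> nat -> delta_mx i j *m mxpow A q = delta_mx i j'.
Proof.
elim: q j => [|q IHq] j jj'.
  rewrite mxpow0 mulmx1; congr delta_mx.
  by apply: val_inj => /=; rewrite jj' addn0.
have jS : (j.+1 < k)%N by have := ltn_ord j'; lia.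
rewrite mxpowS mulmxA (@delta_mx_mul_companion i j (Ordinal jS)) //.
by apply: IHq; rewrite jj' /= addSnnS.
Qed.

Lemma companion_mxderiv_relation (h : 'I_k) :
  (-1) ^+ (k - h.+1) *: mxderiv h A
  = mxderiv (ord_last h) A *m mxpow A (k - h.+1).
Proof.
have h_lt := ltn_ord h.
rewrite !mxderiv_companion -scalemxAl.
rewrite (@delta_mx_mul_mxpow_companion _ _ _ (rev_ord h)); last by rewrite /=; lia.
rewrite scalerA -exprD (_ : ord_last (ord_last h) = ord_last h); last exact: val_inj.
by congr (_ ^+ _ *: _); rewrite /=; lia.
Qed.

End Companion.

Theorem mainTheorem6 (k : nat) (hk : (2 <= k)%N) (h : 'I_k) (p : nat) :
  (-1) ^+ (k - h.+1) *: mxderiv h (mxpow (companion k) p)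
  = mxderiv (ord_last h) (mxpow (companion k) p) *m mxpow (companion k) (k - h.+1).
Proof.
exact/mxderiv_mxpow_mulmx/companion_mxderiv_relation.
Qed.
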